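(* Let $c\ge 3$ and let $G$ be a $c$-edge-colored multigraph (without loops, and with no two parallel edges of the same color) with $n$ vertices, such that $|E_{uv}|\le c-1$ for every pair of distinct vertices $u,v$. If $\delta_i(x)\ge n/2$ for every $x\in V(G)$ and every $i\in\{1,\ldots,c\}$, then $G$ has a properly colored hamiltonian cycle.
   Context: A $c$-edge-colored multigraph is a finite multigraph without loops (parallel edges allowed) together with a map $\phi:E(G)\to\{1,\ldots,c\}$. For $u,v\in V(G)$, $E_{uv}$ is the set of edges with end vertices $u$ and $v$. For $x\in V(G)$ and a color $i$, $\delta_i(x)$ is the number of vertices joined to $x$ by an edge of color $i$. A properly colored (PC) hamiltonian cycle is a cyclic sequence $(x_1,f_1,x_2,f_2,\ldots,x_n,f_n,x_1)$ containing every vertex exactly once, with $f_i\in E_{x_ix_{i+1}}$ (indices mod $n$), such that any two consecutive edges, including $f_n$ and $f_1$, have different colors. *)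

From mathcomp Require Import all_boot all_fingroup.
Set Implicit Arguments. Unset Strict Implicit. Unset Printing Implicit Defensive.

(* A c-edge-coloured loopless multigraph on vertex set 'I_n, with no two
   parallel edges of the same colour, is encoded by
   col : 'I_n -> 'I_n -> 'I_c -> bool, where col u v i means that there is
   an edge of colour i between u and v.  Colours {1..c} are 'I_c. *)
Definition colored_multigraph (n c : nat) (col : 'I_n -> 'I_n -> 'I_c -> bool) :=
  (forall u v i, col u v i = col v u i) /\ (forall u i, ~~ col u u i).

Definition mult (n c : nat) (col : 'I_n -> 'I_n -> 'I_c -> bool) (u v : 'I_n) : nat :=
  #|[set i | col u v i]|.

Definition cdeg (n c : nat) (col : 'I_n -> 'I_n -> 'I_c -> bool) (i : 'I_c) (x : 'I_n) : nat :=
  #|[set y | col x y i]|.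

(* Properly coloured hamiltonian cycle (x_1,f_1,...,x_n,f_n,x_1):
   the vertices are listed by a permutation p of 'I_n (position k -> vertex),
   f k is the colour of the edge from position k to position k+1 (mod n),
   and consecutive edges (cyclically) have distinct colours. *)
Definition PC_hamiltonian_cycle (n c : nat) (col : 'I_n -> 'I_n -> 'I_c -> bool) :=
  exists (p : {perm 'I_n}) (f : 'I_n -> 'I_c),
    forall k : 'I_n, col (p k) (p (ordS k)) (f k) /\ f k != f (ordS k).

From mathcomp Require Import all_boot all_fingroup zify.
Set Implicit Arguments. Unset Strict Implicit. Unset Printing Implicit Defensive.

(* Call u, v multiply joined if at least two edges join them, and let d be the number of
   vertices multiply joined to x.  Counting colours at x,
   c n / 2 <= sum_i delta_i(x) = sum_y |E_xy| <= (n - 1) + (c - 2) d,  so  2 d > n,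
   and Dirac's theorem gives a hamiltonian cycle of multiply joined pairs.  Each of its
   edges offers two colours, and colours can be chosen greedily around it unless all its
   edges offer the same two colours S.  In that case pick a colour t outside S.  On the
   cycle x ... z, the multi-degree of x and the t-degree of z add up to more than n, so
   some consecutive u, y have x, y multiply joined and u z of colour t; then
   z ... y x ... u is a hamiltonian path of multiply joined pairs closed by the t-edge
   u z, and the greedy choice succeeds starting from t. *)

Lemma uniq_count_card (T : finType) (P : pred T) (s : seq T) :
  uniq s -> {subset P <= s} -> count P s = #|P|.
Proof.
move=> s_uniq P_s; rewrite -size_filter -(card_uniqP (filter_uniq P s_uniq)).
by apply: eq_card => y; rewrite mem_filter; case Py: (P y); rewrite // P_s.
Qed.

Lemma exists_notin (T : finType) (A : {pred T}) : #|A| < #|T| -> exists x, x \notin A.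
Proof.
move=> lt_A; have [x x_A | all_A] := pickP [predC A]; first by exists x.
suff : #|T| <= #|A| by rewrite leqNgt lt_A.
by apply/subset_leq_card/subsetP => x _; have := all_A x; rewrite /= => /negbFE.
Qed.

Lemma mem_spanning (T : finType) (s : seq T) y : uniq s -> size s = #|T| -> y \in s.
Proof.
move=> s_uniq s_size.
have le_enum : size (enum T) <= size s by rewrite -cardT s_size.
by have [_ ->] := uniq_min_size s_uniq (fun z _ => mem_enum T z) le_enum; rewrite mem_enum.
Qed.

Lemma split_adjacent (T : Type) (P Q : pred T) x p :
  size p < count Q (belast x p) + count P p ->
  exists A y B, [/\ p = A ++ y :: B, Q (last x A) & P y].
Proof.
elim: p x => [|y p IHp] x //=.
have [/andP [Qx Py] _ | QPxy lt] := boolP (Q x && P y); first by exists [::], y, p.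
have lt' : size p < count Q (belast y p) + count P p.
  by move: QPxy lt; case: (Q x); case: (P y) => /=; lia.
by have [A [z [B [-> QA Pz]]]] := IHp y lt'; exists (y :: A), z, B.
Qed.

Lemma crossing_of_card (T : finType) (P Q : pred T) x p :
  uniq (x :: p) -> {subset P <= p} -> {subset Q <= belast x p} ->
  size p < #|P| + #|Q| ->
  exists A y B, [/\ p = A ++ y :: B, Q (last x A) & P y].
Proof.
move=> xp_uniq P_p Q_p lt_p; apply: split_adjacent.
have p_uniq : uniq p by case/andP: xp_uniq.
have bl_uniq : uniq (belast x p) by move: xp_uniq; rewrite lastI rcons_uniq => /andP [].
by rewrite (uniq_count_card p_uniq P_p) (uniq_count_card bl_uniq Q_p) addnC.
Qed.

Lemma sorted_cross (T : Type) (e : rel T) x A y B :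
  symmetric e -> path e x (A ++ y :: B) -> e x y ->
  sorted e (rev (y :: B) ++ x :: A).
Proof.
move=> e_sym; rewrite cat_path => /andP [pA /= /andP [_ pB]] exy.
rewrite sorted_cat_cons -rev_cons rev_sorted /= pA andbT (e_sym y) exy /=.
by rewrite (@eq_path _ _ e) // => u v; rewrite e_sym.
Qed.

Lemma cycle_nth (T : Type) (e : rel T) x0 s k :
  path.cycle e s -> k < size s -> e (nth x0 s k) (nth x0 s (k.+1 %% size s)).
Proof.
case: s => [|x p] //= /(pathP x0) e_s lt_k; have := e_s k; rewrite size_rcons => /(_ lt_k).
rewrite -rcons_cons nth_rcons /= lt_k nth_rcons.
move: lt_k; rewrite ltnS leq_eqVlt => /orP [/eqP -> | lt_kp].
  by rewrite ltnn eqxx modnn.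
by rewrite lt_kp modn_small.
Qed.

Lemma irreflexive_cycle_size (T : Type) (e : rel T) s :
  irreflexive e -> path.cycle e s -> size s != 1.
Proof. by move=> e_irr; case: s => [|x [|]] //=; rewrite e_irr. Qed.

Lemma nth_rot (T : Type) (x0 : T) (s : seq T) r k :
  r <= size s -> k < size s -> nth x0 (rot r s) k = nth x0 s ((k + r) %% size s).
Proof.
move=> le_r lt_k; rewrite /rot nth_cat size_drop.
case: ltnP => h; first by rewrite nth_drop addnC modn_small //; lia.
rewrite nth_take; last by lia.
have -> : k + r = (k - (size s - r)) + size s by lia.
by rewrite modnDr modn_small //; lia.
Qed.

(** * Dirac's theorem *)

Section Dirac.
Variables (T : finType) (e : rel T).
Hypotheses (e_sym : symmetric e) (e_irr : irreflexive e).
Hypothesis e_deg : forall x : T, #|T| < 2 * #|[set y : T | e x y]|.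

Definition upath (s : seq T) := uniq s && sorted e s.

Lemma exists_longest_upath (x0 : T) :
  exists x p, upath (x :: p) /\ forall s, upath s -> size s <= (size p).+1.
Proof.
pose P k := [exists t : k.-tuple T, upath t].
have P1 : P 1 by apply/existsP; exists [tuple x0].
have P_bound k : P k -> k <= #|T|.
  case/existsP=> t /andP [t_uniq _].
  by rewrite -(size_tuple t) -(card_uniqP t_uniq) max_card.
case: (ex_maxnP (ex_intro P 1 P1) P_bound) => m /existsP [t up_t] m_max.
have longest s : upath s -> size s <= m.
  by move=> up_s; apply/m_max/existsP; exists (in_tuple s).
have m_pos : 0 < m := m_max 1 P1.
have := size_tuple t; case: (tval t) up_t => [|x p] up_xp /= size_xp.
  by rewrite -size_xp in m_pos.
by exists x, p; split=> // s /longest; rewrite size_xp.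
Qed.

Section Longest.
Variables (x : T) (p : seq T).
Hypothesis up_xp : upath (x :: p).
Hypothesis longest : forall s, upath s -> size s <= (size p).+1.

Lemma longest_head_nbr y : e x y -> y \in p.
Proof.
move=> exy; apply/negPn/negP => y_p.
have y_x : y != x by apply: contraTneq exy => ->; rewrite e_irr.
have /longest : upath (y :: x :: p).
  move: up_xp; rewrite /upath /= in_cons negb_or y_x y_p (e_sym y) exy.
  by case/andP=> /andP [-> ->] ->.
by rewrite ltnn.
Qed.

Lemma longest_last_nbr y : e (last x p) y -> y \in belast x p.
Proof.
move=> ezy; apply/negPn/negP => y_bl.
have y_z : y != last x p by apply: contraTneq ezy => ->; rewrite e_irr.
have y_xp : y \notin x :: p by rewrite lastI mem_rcons in_cons negb_or y_z.
have /longest : upath (rcons (x :: p) y).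
  move: up_xp; rewrite /upath rcons_uniq y_xp /= rcons_path ezy.
  by case/andP=> -> ->.
by rewrite size_rcons ltnn.
Qed.

Lemma longest_upath_closes : exists2 D, perm_eq D (x :: p) & path.cycle e D.
Proof.
have /andP [xp_uniq x_path] := up_xp.
set z := last x p.
have crossing : size p < #|e x| + #|e z|.
  have : size (x :: p) <= #|T| by rewrite -(card_uniqP xp_uniq) max_card.
  have := e_deg x; have := e_deg z; rewrite !cardsE /=.
  by lia.
have [A [y [B [p_eq ezA exy]]]] :=
  crossing_of_card xp_uniq longest_head_nbr longest_last_nbr crossing.
have z_eq : z = last y B by rewrite /z p_eq last_cat.
exists (rev (y :: B) ++ x :: A).
  by rewrite perm_catC p_eq /= perm_cons perm_cat2l perm_rev.
move: x_path; rewrite /= p_eq => /(sorted_cross e_sym)/(_ exy).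
rewrite (lastI y B) rev_rcons -z_eq /= rcons_path => -> /=.
by rewrite last_cat /= e_sym.
Qed.

Lemma longest_cycle_spans (D : seq T) :
  uniq D -> path.cycle e D -> size D = (size p).+1 -> size D = #|T|.
Proof.
move=> D_uniq D_cycle D_size.
have : size D <= #|T| by rewrite -(card_uniqP D_uniq) max_card.
rewrite leq_eqVlt => /orP [/eqP // | lt_D]; exfalso.
have [w w_D] := exists_notin (leq_ltn_trans (card_size D) lt_D).
have [/hasP [y y_D ewy] | /hasPn w_nbr] := boolP (has (e w) D).
  case/rot_to: y_D => r q D_rot.
  have /longest : upath (w :: y :: q).
    rewrite /upath [sorted _ _]/= ewy cons_uniq -D_rot mem_rot rot_uniq w_D D_uniq /=.
    by move: D_cycle; rewrite -(rot_cycle r) D_rot /= rcons_path => /andP [].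
  by rewrite -D_size -(size_rot r D) D_rot ltnn.
have deg_w : #|[set y | e w y]| + size (w :: D) <= #|T|.
  have card_wD : #|[set y in w :: D]| = size (w :: D).
    by rewrite cardsE; apply/card_uniqP; rewrite /= w_D.
  rewrite -(cardsC [set y in w :: D]) card_wD addnC leq_add2l.
  apply/subset_leq_card/subsetP => y; rewrite !inE => ewy.
  apply/negP => /orP [/eqP y_w | y_D]; first by rewrite y_w e_irr in ewy.
  by rewrite (negbTE (w_nbr y y_D)) in ewy.
have deg_x : #|[set y | e x y]| <= size p.
  apply: leq_trans (card_size p); apply/subset_leq_card/subsetP => y.
  by rewrite inE; apply: longest_head_nbr.
by move: deg_w deg_x (e_deg w) (e_deg x); rewrite /= D_size; lia.
Qed.

End Longest.

Theorem Dirac_hamiltonian_cycle :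
  exists s, [/\ uniq s, size s = #|T| & path.cycle e s].
Proof.
have [x0 _ | T0] := pickP (@predT T); last by exists [::]; rewrite (eq_card0 T0).
have [x [p [up_xp longest]]] := exists_longest_upath x0.
have [D perm_D D_cycle] := longest_upath_closes up_xp longest.
have D_uniq : uniq D by rewrite (perm_uniq perm_D); case/andP: up_xp.
have D_size : size D = (size p).+1 by rewrite (perm_size perm_D).
by exists D; split=> //; apply: (longest_cycle_spans up_xp longest).
Qed.

End Dirac.

(** * Choosing colours around a cycle *)

Lemma exists_other (T : finType) (A : {set T}) a :
  1 < #|A| -> exists2 x, x \in A & x != a.
Proof.
move=> A_gt1; have : 0 < #|A :\ a|.
  by move: A_gt1; rewrite (cardsD1 a A); case: (a \in A) => /=; lia.
by case/card_gt0P => x /setD1P [x_a x_A]; exists x.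
Qed.

Lemma path_choice (T : finType) (L : nat -> {set T}) m a b :
  (forall k, k < m -> 1 < #|L k|) -> 1 < #|L m :\ b| ->
  exists g : nat -> T, [/\ forall k, k <= m -> g k \in L k, g 0 != a, g m != b
                         & forall k, k < m -> g k != g k.+1].
Proof.
elim: m L a => [|m IHm] L a L_gt1 Lm_gt1.
  have [x /setD1P [x_b x_L] x_a] := exists_other a Lm_gt1.
  by exists (fun=> x); split=> // k; rewrite leqn0 => /eqP ->.
have [x x_L x_a] := exists_other a (L_gt1 0 isT).
have [g [g_L g0 gm g_step]] := IHm (fun k => L k.+1) x (fun k => L_gt1 k.+1) Lm_gt1.
exists (fun k => if k is k'.+1 then g k' else x).
split=> // [[|k] le_k | [|k] lt_k] /=;
  [exact: x_L | exact: g_L | by rewrite eq_sym | exact: g_step].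
Qed.

Lemma cyclic_choice (T : finType) (L : nat -> {set T}) m x :
  x \in L m.+1 -> (forall k, k < m -> 1 < #|L k|) -> 1 < #|L m :\ x| ->
  exists g : nat -> T, forall k, k < m.+2 -> g k \in L k /\ g k != g (k.+1 %% m.+2).
Proof.
move=> x_L L_gt1 Lm_gt1.
have [g [g_L g0 gm g_step]] := path_choice x L_gt1 Lm_gt1.
exists (fun k => if k == m.+1 then x else g k) => k.
rewrite ltnS leq_eqVlt => /orP [/eqP -> | le_km]; first by rewrite eqxx modnn eq_sym.
rewrite modn_small // eqSS (ltn_eqF le_km) g_L //; split=> //.
by case: (eqVneq k m) => [-> // | k_m]; apply: g_step; rewrite ltn_neqAle k_m.
Qed.

Lemma cyclic_sets_dichotomy (T : finType) (L : nat -> {set T}) n :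
  (forall k, k < n -> 1 < #|L k|) ->
  (exists k x, [/\ k < n, x \in L (k.+1 %% n) & 1 < #|L k :\ x|]) \/
  (forall k, k < n -> L k = L 0 /\ #|L k| = 2).
Proof.
move=> L_gt1.
case: (boolP [exists k : 'I_n, [exists x, (x \in L (k.+1 %% n)) && (1 < #|L k :\ x|)]]).
  case/existsP=> k /existsP [x /andP [x_L Lk_gt1]].
  by left; exists k, x; split=> //; apply: ltn_ord.
move/existsPn=> none; right.
have small k x : k < n -> x \in L (k.+1 %% n) -> #|L k :\ x| <= 1.
  move=> lt_k x_L; move: (none (Ordinal lt_k)) => /existsPn/(_ x).
  by rewrite /= x_L -leqNgt.
have next_lt k : k < n -> k.+1 %% n < n by move=> lt_k; rewrite ltn_mod; lia.
have card2 k : k < n -> #|L k| = 2.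
  move=> lt_k; have /card_gt0P [x x_L] : 0 < #|L (k.+1 %% n)|.
    by have := L_gt1 _ (next_lt k lt_k); lia.
  have := small k x lt_k x_L; have := cardsD1 x (L k); have := L_gt1 k lt_k.
  by case: (x \in L k) => /=; lia.
have next_eq k : k < n -> L (k.+1 %% n) = L k.
  move=> lt_k; apply/eqP; rewrite eqEcard !card2 ?next_lt // leqnn andbT.
  apply/subsetP => x x_L; apply/negPn/negP => x_Lk.
  have := small k x lt_k x_L; have := cardsD1 x (L k); rewrite (negbTE x_Lk) card2 //; lia.
elim=> [|k IHk] lt_k; first by rewrite card2.
split; last exact: card2.
by rewrite -(modn_small lt_k) next_eq ?(ltnW lt_k) // (IHk (ltnW lt_k)).1.
Qed.

(** * Coloured multigraphs *)

Lemma sum_nat_bool_card (T : finType) (P : pred T) : \sum_y (P y : nat) = #|[set y | P y]|.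
Proof. by rewrite -sum1dep_card [RHS]big_mkcond; apply: eq_bigr => y _; case: (P y). Qed.

Section MultigraphCycles.
Variables (c n : nat) (col : 'I_n -> 'I_n -> 'I_c -> bool).
Hypothesis col_sym : forall u v i, col u v i = col v u i.
Hypothesis col_irr : forall u i, ~~ col u u i.

Definition multi_adj : rel 'I_n := fun u v => 1 < mult col u v.

Lemma mult_diag u : mult col u u = 0.
Proof.
by rewrite /mult -sum_nat_bool_card big1 // => i _; rewrite (negbTE (col_irr u i)).
Qed.

Lemma multi_adj_sym : symmetric multi_adj.
Proof. by move=> u v; rewrite /multi_adj /mult; under eq_finset do rewrite col_sym. Qed.

Lemma multi_adj_irr : irreflexive multi_adj.
Proof. by move=> u; rewrite /multi_adj mult_diag. Qed.

Lemma sum_mult x : \sum_y mult col x y = \sum_i cdeg col i x.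
Proof.
rewrite /mult /cdeg; under eq_bigr do rewrite -sum_nat_bool_card.
by rewrite exchange_big; apply: eq_bigr => i _; rewrite -sum_nat_bool_card.
Qed.

Lemma multi_adj_deg x :
  3 <= c -> (forall u v, u != v -> mult col u v <= c - 1) ->
  (forall y i, n <= 2 * cdeg col i y) ->
  n < 2 * #|[set y | multi_adj x y]|.
Proof.
move=> c3 mult_le cdeg_ge.
have lower : c * n <= 2 * \sum_y mult col x y.
  rewrite sum_mult big_distrr /= -[c in c * n](card_ord c) -sum_nat_const.
  by apply: leq_sum => i _; apply: cdeg_ge.
have upper : \sum_y mult col x y <= \sum_y ((y != x) + (c - 2) * multi_adj x y).
  apply: leq_sum => y _; have [-> | y_x] := eqVneq y x; first by rewrite mult_diag.
  have := mult_le x y; rewrite eq_sym y_x /multi_adj => /(_ isT).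
  by case: ltnP => /=; lia.
rewrite big_split /= -big_distrr /= !sum_nat_bool_card in upper.
have card_x : #|[set y | y != x]| = n.-1.
  by rewrite -[n in n.-1]card_ord -(cardsC1 x); apply: eq_card => y; rewrite !inE.
have n_pos : 0 < n := leq_ltn_trans (leq0n x) (ltn_ord x).
rewrite card_x in upper; rewrite ltnNge; apply/negP => le_n.
move: lower upper (leq_mul (leqnn (c - 2)) le_n).
(* [set] identifies the two syntactic forms of the sum, which [nia] would treat apart. *)
by set S := \sum_y mult col x y; nia.
Qed.

Variable x0 : 'I_n.

Definition edge_colours (s : seq 'I_n) k : {set 'I_c} :=
  [set i | col (nth x0 s k) (nth x0 s (k.+1 %% n)) i].

Lemma multi_cycle_colours (s : seq 'I_n) :
  size s = n -> path.cycle multi_adj s -> forall k, k < n -> 1 < #|edge_colours s k|.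
Proof.
by move=> s_size s_cycle k; move: (cycle_nth (k := k) x0 s_cycle); rewrite s_size.
Qed.

Lemma PC_of_choice (s : seq 'I_n) (g : nat -> 'I_c) :
  uniq s -> size s = n ->
  (forall k, k < n -> g k \in edge_colours s k /\ g k != g (k.+1 %% n)) ->
  PC_hamiltonian_cycle col.
Proof.
move=> s_uniq s_size choice.
have nth_inj : injective (fun k : 'I_n => nth x0 s k).
  by move=> i j /eqP; rewrite nth_uniq ?s_size // => /eqP /val_inj.
exists (perm nth_inj), (fun k => g k) => k; rewrite !permE /=.
by have [] := choice k (ltn_ord k); rewrite inE.
Qed.

Lemma PC_of_end_colour (s : seq 'I_n) t m :
  n = m.+2 -> uniq s -> size s = n -> t \in edge_colours s m.+1 ->
  (forall k, k < m -> 1 < #|edge_colours s k|) -> 1 < #|edge_colours s m :\ t| ->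
  PC_hamiltonian_cycle col.
Proof.
move=> n_eq s_uniq s_size t_end colours_gt1 colours_m.
have [g choice] := cyclic_choice t_end colours_gt1 colours_m.
rewrite -n_eq in choice; exact: (PC_of_choice s_uniq s_size choice).
Qed.

Lemma edge_colours_rot (s : seq 'I_n) r k :
  size s = n -> r <= n -> k < n -> edge_colours (rot r s) k = edge_colours s ((k + r) %% n).
Proof.
move=> s_size le_r lt_k; have n_pos : 0 < n by lia.
rewrite /edge_colours !nth_rot ?s_size ?ltn_mod //.
by rewrite -[k.+1]addn1 modnDml -[((k + r) %% n).+1]addn1 modnDml addnAC.
Qed.

Lemma PC_of_special_edge (s : seq 'I_n) k x :
  1 < n -> uniq s -> size s = n -> (forall j, j < n -> 1 < #|edge_colours s j|) ->
  k < n -> x \in edge_colours s (k.+1 %% n) -> 1 < #|edge_colours s k :\ x| ->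
  PC_hamiltonian_cycle col.
Proof.
move=> n_gt1 s_uniq s_size colours_gt1 lt_k x_L Lk_gt1.
have n_eq : n = n.-2.+2 by lia.
set r := k.+2 %% n.
have le_r : r <= n by rewrite ltnW // ltn_mod; lia.
have colours_r j : j < n -> edge_colours (rot r s) j = edge_colours s ((j + k.+2) %% n).
  by move=> lt_j; rewrite edge_colours_rot // modnDmr.
apply: (PC_of_end_colour (s := rot r s) (t := x) (m := n.-2) n_eq).
- by rewrite rot_uniq.
- by rewrite size_rot.
- by rewrite colours_r; [rewrite (_ : n.-2.+1 + k.+2 = k.+1 + n) ?modnDr | ]; lia.
- by move=> j lt_j; rewrite colours_r; [apply: colours_gt1; rewrite ltn_mod | ]; lia.
- by rewrite colours_r; [rewrite (_ : n.-2 + k.+2 = k + n) ?modnDr ?modn_small | ]; lia.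
Qed.

Lemma PC_of_rerouting x A u y B t :
  uniq (x :: rcons A u ++ y :: B) -> size (x :: rcons A u ++ y :: B) = n ->
  path multi_adj x (rcons A u ++ y :: B) -> multi_adj x y -> col u (last y B) t ->
  1 < #|[set i | col (last x A) u i] :\ t| ->
  PC_hamiltonian_cycle col.
Proof.
move=> s_uniq s_size s_path xy uz_t last_gt1.
set D := rev (y :: B) ++ x :: rcons A u.
have D_perm : perm_eq D (x :: rcons A u ++ y :: B).
  by rewrite perm_catC /= perm_cons perm_cat2l perm_rev.
have D_sorted : sorted multi_adj D := sorted_cross multi_adj_sym s_path xy.
set P := rev (y :: B) ++ belast x A.
have D_eq : D = P ++ [:: last x A; u].
  by rewrite /D /P -rcons_cons (lastI x A) -!cats1 -!catA.
have D_size : size D = n by rewrite (perm_size D_perm).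
have n_eq : n = (size P).+2 by move: D_size; rewrite D_eq size_cat addn2 => ->.
have D_head : nth x0 D 0 = last y B by rewrite /D (lastI y B) rev_rcons.
have D_pen : nth x0 D (size P) = last x A by rewrite D_eq nth_cat ltnn subnn.
have D_last : nth x0 D (size P).+1 = u by rewrite D_eq nth_cat ltnNge leqnSn subSnn.
apply: (PC_of_end_colour (s := D) (t := t) n_eq); rewrite ?(perm_uniq D_perm) //.
- by rewrite inE D_last -n_eq modnn D_head.
- move=> k lt_k; rewrite /edge_colours modn_small; last lia.
  by apply: (sortedP x0 D_sorted); rewrite D_size; lia.
- have lt_P : (size P).+1 < n by lia.
  by rewrite /edge_colours D_pen (modn_small lt_P) D_last.
Qed.

Lemma rerouting_split (x : 'I_n) p t :
  uniq (x :: p) -> size (x :: p) = n -> ~~ col x (last x p) t ->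
  (forall v, n < 2 * #|[set y | multi_adj v y]|) -> (forall v, n <= 2 * cdeg col t v) ->
  exists A u y B, [/\ p = rcons A u ++ y :: B, col u (last x p) t & multi_adj x y].
Proof.
move=> xp_uniq xp_size xz_t deg_adj deg_t; set z := last x p.
have xp_span v : v \in x :: p by apply: mem_spanning; rewrite // card_ord.
have adj_p y : multi_adj x y -> y \in p.
  move=> xy; move: (xp_span y); rewrite in_cons => /orP [/eqP y_x | //].
  by rewrite y_x multi_adj_irr in xy.
have t_bl v : col v z t -> v \in belast x p.
  move=> vz; move: (xp_span v); rewrite lastI mem_rcons in_cons => /orP [/eqP v_z | //].
  by rewrite v_z (negbTE (col_irr z t)) in vz.
have crossing : size p < #|multi_adj x| + #|[pred v | col v z t]|.
  have -> : #|[pred v | col v z t]| = cdeg col t z.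
    by apply: eq_card => v; rewrite !inE col_sym.
  by move: xp_size (deg_adj x) (deg_t z); rewrite (cardsE (multi_adj x)) /=; lia.
have [A [y [B [p_eq At xy]]]] := crossing_of_card xp_uniq adj_p t_bl crossing.
case/lastP: A p_eq At => [|A u] p_eq At; first by rewrite /= At in xz_t.
by exists A, u, y, B; rewrite last_rcons in At.
Qed.

Lemma PC_of_uniform_cycle (s : seq 'I_n) S t :
  uniq s -> size s = n -> path.cycle multi_adj s ->
  (forall k, k < n -> edge_colours s k = S) -> t \notin S ->
  (forall v, n < 2 * #|[set y | multi_adj v y]|) -> (forall v, n <= 2 * cdeg col t v) ->
  PC_hamiltonian_cycle col.
Proof.
have n_pos : 0 < n := leq_ltn_trans (leq0n x0) (ltn_ord x0).
case: s => [|x p] s_uniq s_size s_cycle colours_S t_S deg_adj deg_t.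
  by rewrite -s_size in n_pos.
have S_gt1 : 1 < #|S| by rewrite -(colours_S 0) // (multi_cycle_colours s_size).
have nth_last_n : nth x0 (x :: p) n.-1 = last x p.
  by rewrite -[last x p]/(last x0 (x :: p)) -nth_last s_size.
have xz_t : ~~ col x (last x p) t.
  apply: contra t_S => xz_t; rewrite -(colours_S n.-1) ?prednK //.
  by rewrite inE prednK // modnn nth_last_n col_sym.
have [A [u [y [B [p_eq uz_t xy]]]]] := rerouting_split s_uniq s_size xz_t deg_adj deg_t.
have last_S : [set i | col (last x A) u i] = S.
  have lt_A : (size A).+1 < n by move: s_size; rewrite p_eq /= size_cat size_rcons; lia.
  rewrite -(colours_S (size A)); last exact: ltnW lt_A.
  rewrite /edge_colours (modn_small lt_A) p_eq.
  rewrite -cat_cons -rcons_cons (lastI x A) !cat_rcons -(size_belast x A).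
  by rewrite nth_cat ltnn subnn nth_cat ltnNge leqnSn subSnn.
rewrite p_eq in s_uniq s_size s_cycle uz_t.
apply: (PC_of_rerouting (t := t) s_uniq s_size _ xy).
- by move: s_cycle; rewrite /= rcons_path => /andP [].
- by rewrite last_cat in uz_t.
- by rewrite last_S; rewrite (cardsD1 t S) (negbTE t_S) in S_gt1.
Qed.

End MultigraphCycles.

Theorem mainTheorem12 (c n : nat) (col : 'I_n -> 'I_n -> 'I_c -> bool) :
  3 <= c ->
  colored_multigraph col ->
  (forall u v : 'I_n, u != v -> mult col u v <= c - 1) ->
  (forall (x : 'I_n) (i : 'I_c), n <= 2 * cdeg col i x) ->
  PC_hamiltonian_cycle col.
Proof.
move=> c3 [col_sym col_irr] mult_le cdeg_ge.
have [n0 | n_pos] := posnP n.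
  by subst n; exists 1%g, (fun=> Ordinal (leq_ltn_trans (leq0n 2) c3)) => [[]].
pose x0 : 'I_n := Ordinal n_pos.
have deg_adj v := multi_adj_deg col_irr v c3 mult_le cdeg_ge.
have deg_adj_card v : #|'I_n| < 2 * #|[set y | multi_adj col v y]| by rewrite card_ord.
have [s [s_uniq s_size s_cycle]] :=
  Dirac_hamiltonian_cycle (multi_adj_sym col_sym) (multi_adj_irr col_irr) deg_adj_card.
rewrite card_ord in s_size.
have n_gt1 : 1 < n.
  by have := irreflexive_cycle_size (multi_adj_irr col_irr) s_cycle; rewrite s_size; lia.
have colours_gt1 := multi_cycle_colours x0 s_size s_cycle.
have [[k [x [lt_k x_L Lk_gt1]]] | uniform] := cyclic_sets_dichotomy colours_gt1.
  exact: (PC_of_special_edge n_gt1 s_uniq s_size colours_gt1 lt_k x_L Lk_gt1).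
have [t t_S] : exists t, t \notin edge_colours col x0 s 0.
  by apply: exists_notin; rewrite (uniform 0 n_pos).2 card_ord.
apply: (PC_of_uniform_cycle (x0 := x0) col_sym col_irr s_uniq s_size s_cycle _ t_S deg_adj
  (fun v => cdeg_ge v t)).
by move=> k /uniform [].
Qed.
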